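(* Let $s$ be a real-valued function with $s(t)=0$ for $t\notin[0,T_s]$ and $\int_0^{T_s}s(t)^2dt=1$, and let $\tau\in(0,T_s)$. Assume the matrix $\tilde T(\omega)$ defined in the context is positive definite for every $\omega\in[-\pi,\pi]$. Then for every $\rho_0>0$ and all nonzero complex numbers $\alpha_1,\alpha_2$, $$I_{E\text{-}MacA}>\log\left(1+\rho_0(|\alpha_1|^2+|\alpha_2|^2)\right).$$ The right-hand side is the mutual information of the synchronous space-time-coded $2\times1$ relay–destination link.
   Context: Let $S(t)=[s(t),s(t-\tau)]^T$ and $G(k)=\int_{-\infty}^{\infty}S(t)S(t-kT_s)^Tdt$ for $k\in\mathbb Z$. Define $\tilde T(\omega)=\sum_{k\in\mathbb Z}G(k)e^{-jk\omega}$ for $\omega\in[-\pi,\pi]$, a Hermitian $2\times 2$ matrix. For $s$ supported in $[0,T_s]$, its diagonal entries satisfy $\tilde T_{11}(\omega)=\tilde T_{22}(\omega)=1$. Define $$I_{E\text{-}MacA}=\frac1{2\pi}\int_{-\pi}^{\pi}\log\left(1+\rho_0(|\alpha_1|^2+|\alpha_2|^2)\tilde T_{11}(\omega)+\rho_0^2|\alpha_1|^2|\alpha_2|^2\det\tilde T(\omega)\right)d\omega.$$ *)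

From Stdlib Require Import Reals ZArith ClassicalEpsilon.
Open Scope R_scope.

Record Cpx := mkC { Re : R ; Im : R }.
Definition Cadd (z w : Cpx) : Cpx := mkC (Re z + Re w) (Im z + Im w).
Definition Csub (z w : Cpx) : Cpx := mkC (Re z - Re w) (Im z - Im w).
Definition Cmul (z w : Cpx) : Cpx :=
  mkC (Re z * Re w - Im z * Im w) (Re z * Im w + Im z * Re w).
Definition Cconj (z : Cpx) : Cpx := mkC (Re z) (- Im z).
Definition C0 : Cpx := mkC 0 0.
Definition Cnorm2 (z : Cpx) : R := Re z * Re z + Im z * Im z.

(* Riemann integral of f on [a,b] when it exists (arbitrary value otherwise). *)
Definition RInt (f : R -> R) (a b : R) : R :=
  epsilon (inhabits 0)
    (fun l => exists pr : Riemann_integrable f a b, RiemannInt pr = l).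

Definition lim_seq (u : nat -> R) : R :=
  epsilon (inhabits 0) (fun l => Un_cv u l).

Definition RInt_R (f : R -> R) : R :=
  lim_seq (fun n => RInt f (- INR n) (INR n)).

(* Sum over k in Z: limit of symmetric partial sums \sum_{k=-N}^{N} a k. *)
Definition zpartial (a : Z -> R) (N : nat) : R :=
  sum_f_R0 (fun m => a (Z.of_nat m - Z.of_nat N)%Z) (2 * N).
Definition zsum (a : Z -> R) : R := lim_seq (zpartial a).

Inductive idx := I1 | I2.

Definition Scomp (s : R -> R) (tau : R) (i : idx) (t : R) : R :=
  match i with I1 => s t | I2 => s (t - tau) end.

Definition G (s : R -> R) (tau Ts : R) (k : Z) (i j : idx) : R :=
  RInt_R (fun t => Scomp s tau i t * Scomp s tau j (t - IZR k * Ts)).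

(* \tilde T(w)_{ij} = \sum_k G(k)_{ij} e^{-j k w}, e^{-jkw} = cos(kw) - j sin(kw) *)
Definition Ttilde (s : R -> R) (tau Ts w : R) (i j : idx) : Cpx :=
  mkC (zsum (fun k => G s tau Ts k i j * cos (IZR k * w)))
      (zsum (fun k => - (G s tau Ts k i j * sin (IZR k * w)))).

Definition detT (s : R -> R) (tau Ts w : R) : Cpx :=
  Csub (Cmul (Ttilde s tau Ts w I1 I1) (Ttilde s tau Ts w I2 I2))
       (Cmul (Ttilde s tau Ts w I1 I2) (Ttilde s tau Ts w I2 I1)).

Definition quad_form (M : idx -> idx -> Cpx) (z1 z2 : Cpx) : Cpx :=
  Cadd (Cadd (Cmul (Cconj z1) (Cmul (M I1 I1) z1))
             (Cmul (Cconj z1) (Cmul (M I1 I2) z2)))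
       (Cadd (Cmul (Cconj z2) (Cmul (M I2 I1) z1))
             (Cmul (Cconj z2) (Cmul (M I2 I2) z2))).

Definition pos_def (M : idx -> idx -> Cpx) : Prop :=
  forall z1 z2 : Cpx, (z1 <> C0 \/ z2 <> C0) ->
    Im (quad_form M z1 z2) = 0 /\ 0 < Re (quad_form M z1 z2).

(* I_{E-MacA}; T11 and det T are real (T Hermitian), we take their real parts. *)
Definition I_EMacA (s : R -> R) (tau Ts rho0 : R) (a1 a2 : Cpx) : R :=
  / (2 * PI) *
  RInt (fun w => ln (1 + rho0 * (Cnorm2 a1 + Cnorm2 a2) * Re (Ttilde s tau Ts w I1 I1)
                     + rho0 ^ 2 * Cnorm2 a1 * Cnorm2 a2 * Re (detT s tau Ts w)))
       (- PI) PI.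

From Stdlib Require Import Reals ZArith ClassicalEpsilon.
From Stdlib Require Import Lra Lia FunctionalExtensionality List RList.
From Coquelicot Require Rcomplements.
Open Scope R_scope.

(* Since s is supported in [0,Ts] and 0 < tau < Ts, the Gram matrices G(k)
   vanish for |k| >= 2, so every series defining T~(w) reduces to three terms:
   T~(w) is a trigonometric polynomial, in particular continuous in w.  For
   the (1,1) entry, G(+-1)_11 = \int s(t) s(t -+ Ts) dt has an integrand
   supported on a single point, hence vanishes, while G(0)_11 = \int s^2 = 1;
   thus T~_11(w) = 1.  Positive definiteness of T~(w) gives det T~(w) > 0.
   Hence the integrand of I_{E-MacA} is the continuous function
   ln(1 + c + d det T~(w)) with c, d > 0, strictly larger than ln(1 + c) on
   [-pi,pi], and the strict inequality follows because a continuous function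
   attains its minimum on a compact interval. *)

Lemma RInt_eq (f : R -> R) (a b : R) (pr : Riemann_integrable f a b) :
  RInt f a b = RiemannInt pr.
Proof.
  unfold RInt.
  destruct (epsilon_spec (inhabits 0) (fun l => exists pr, RiemannInt pr = l)
              (ex_intro _ (RiemannInt pr) (ex_intro _ pr eq_refl))) as [pr' <-].
  apply RiemannInt_P5.
Qed.

Lemma lim_seq_eq (u : nat -> R) (l : R) : Un_cv u l -> lim_seq u = l.
Proof.
  intro Hu. apply (UL_sequence u); [| exact Hu].
  exact (epsilon_spec (inhabits 0) (fun l => Un_cv u l) (ex_intro _ l Hu)).
Qed.

(* An eventually constant sequence has its eventual value as limit; all limits
   occurring in this proof are of this kind. *)
Lemma lim_seq_eventually (u : nat -> R) (l : R) (N : nat) :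
  (forall n, (N <= n)%nat -> u n = l) -> lim_seq u = l.
Proof.
  intro Hu. apply lim_seq_eq. intros eps Heps. exists N. intros n Hn.
  rewrite Hu by lia. unfold Rdist. rewrite Rminus_diag, Rabs_R0. exact Heps.
Qed.

Lemma zpartial_S (a : Z -> R) (N : nat) :
  zpartial a (S N) = a (- Z.of_nat (S N))%Z + zpartial a N + a (Z.of_nat (S N)).
Proof.
  unfold zpartial.
  replace (2 * S N)%nat with (S (S (2 * N))) by lia.
  rewrite decomp_sum, Nat.pred_succ, tech5 by lia.
  replace (Z.of_nat 0 - Z.of_nat (S N))%Z with (- Z.of_nat (S N))%Z by lia.
  replace (Z.of_nat (S (S (2 * N))) - Z.of_nat (S N))%Z with (Z.of_nat (S N)) by lia.
  replace (sum_f_R0 (fun i => a (Z.of_nat (S i) - Z.of_nat (S N))%Z) (2 * N))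
    with (sum_f_R0 (fun m => a (Z.of_nat m - Z.of_nat N)%Z) (2 * N)); [ring|].
  apply sum_eq; intros m _. f_equal. lia.
Qed.

Lemma zsum_three (a : Z -> R) :
  (forall k, (k >= 2 \/ k <= -2)%Z -> a k = 0) ->
  zsum a = a (-1)%Z + a 0%Z + a 1%Z.
Proof.
  intro Ha. unfold zsum. apply (lim_seq_eventually _ _ 1).
  intros n Hn. induction Hn as [|n Hn IH].
  - rewrite zpartial_S. unfold zpartial. simpl. ring.
  - rewrite zpartial_S, IH, (Ha (- Z.of_nat (S n))%Z), (Ha (Z.of_nat (S n))) by lia.
    ring.
Qed.

(* A function vanishing on the open interval (a,b) is a step function on
   [a,b], hence integrable with integral 0 (its endpoint values are arbitrary). *)
Lemma vanishing_integrable (f : R -> R) (a b : R) :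
  a <= b -> (forall x, a < x < b -> f x = 0) ->
  { pr : Riemann_integrable f a b | RiemannInt pr = 0 }.
Proof.
  intros Hab Hf.
  assert (Hstep : IsStepFun f a b).
  { exists (a :: b :: nil), (0 :: nil). repeat split.
    - intros [|i] Hi; simpl in Hi |- *; [exact Hab | lia].
    - simpl. unfold Rmin; destruct (Rle_dec a b); lra.
    - simpl. unfold Rmax; destruct (Rle_dec a b); lra.
    - intros [|i] Hi; simpl in Hi |- *; [| lia].
      intros x Hx. apply Hf. exact Hx. }
  assert (pr : Riemann_integrable f a b).
  { intro eps. exists (mkStepFun Hstep), (mkStepFun (StepFun_P4 a b 0)). split.
    - intros t _. simpl. unfold fct_cte. rewrite Rminus_diag, Rabs_R0. lra.
    - rewrite StepFun_P18, Rmult_0_l, Rabs_R0. apply cond_pos. }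
  exists pr.
  rewrite (RiemannInt_P18 pr (RiemannInt_P14 a b 0) Hab), RiemannInt_P15; [ring |].
  intros x Hx. unfold fct_cte. apply Hf. exact Hx.
Qed.

Lemma RInt_zero_extension (f : R -> R) (a b c d : R) (pr : Riemann_integrable f b c) :
  a <= b -> b <= c -> c <= d -> (forall x, a < x < b \/ c < x < d -> f x = 0) ->
  RInt f a d = RiemannInt pr.
Proof.
  intros Hab Hbc Hcd Hf.
  destruct (vanishing_integrable f a b) as [p1 E1]; [lra | intros x Hx; apply Hf; lra |].
  destruct (vanishing_integrable f c d) as [p3 E3]; [lra | intros x Hx; apply Hf; lra |].
  pose (p12 := RiemannInt_P24 p1 pr).
  rewrite (RInt_eq _ _ _ (RiemannInt_P24 p12 p3)), <- (RiemannInt_P26 p12 p3).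
  unfold p12. rewrite <- (RiemannInt_P26 p1 pr), E1, E3. ring.
Qed.

Lemma RInt_point_supported (f : R -> R) (a b t0 : R) :
  a <= b -> (forall t, t <> t0 -> f t = 0) -> RInt f a b = 0.
Proof.
  intros Hab Hf.
  set (c := Rmax a (Rmin b t0)).
  assert (Hc : a <= c <= b) by (unfold c, Rmax, Rmin; repeat destruct Rle_dec; lra).
  rewrite (RInt_zero_extension f a c c b (RiemannInt_P7 f c)), RiemannInt_P9; try lra.
  intros x Hx. apply Hf. intros ->.
  unfold c, Rmax, Rmin in Hx; destruct (Rle_dec b t0), (Rle_dec a t0), (Rle_dec a b); lra.
Qed.

Lemma stepfun_comp (h : R -> R) (a b : R) (phi : StepFun a b) :
  IsStepFun (fun t => h (phi t)) a b.
Proof.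
  destruct phi as [g [l [lf [Hord [Hmin [Hmax [Hlen Hconst]]]]]]]. simpl.
  exists l, (map h lf). repeat split; auto.
  - rewrite length_map. exact Hlen.
  - intros i Hi x Hx. rewrite RList_P12 by lia. rewrite (Hconst i Hi x Hx). reflexivity.
Qed.

Lemma integrable_abs_bound (f : R -> R) (a b : R) : Riemann_integrable f a b ->
  exists M, 0 <= M /\ forall t, Rmin a b <= t <= Rmax a b -> Rabs (f t) <= M.
Proof.
  intro Hf.
  destruct (Rcomplements.Riemann_integrable_bound f a b Hf) as [M1 HM1].
  destruct (Rcomplements.Riemann_integrable_bound (fun t => - f t) a b
              (Rcomplements.Riemann_integrable_opp f a b Hf)) as [M2 HM2].
  exists (Rmax 0 (Rmax M1 M2)). split; [apply Rmax_l |].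
  intros t Ht. specialize (HM1 t Ht). specialize (HM2 t Ht).
  unfold Rabs, Rmax; repeat destruct Rle_dec; destruct Rcase_abs; lra.
Qed.

Definition clip (M v : R) : R := Rmax (- M) (Rmin M v).

Lemma clip_spec (M u v : R) : Rabs u <= M ->
  Rabs (u - clip M v) <= Rabs (u - v) /\ Rabs (clip M v) <= M.
Proof.
  intro Hu. unfold clip, Rmax, Rmin.
  destruct (Rle_dec M v), (Rle_dec (- M) _); unfold Rabs in *;
    repeat destruct Rcase_abs; lra.
Qed.

(* The square of a Riemann-integrable function is Riemann-integrable: if phi
   approximates f within psi and |f| <= M, then (clip M phi)^2 approximates f^2
   within 2M psi. *)
Lemma integrable_sq (f : R -> R) (a b : R) : Riemann_integrable f a b ->
  Riemann_integrable (fun t => f t * f t) a b.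
Proof.
  intro Hf.
  destruct (constructive_indefinite_description _ (integrable_abs_bound f a b Hf))
    as [M [HM0 HM]].
  intro eps.
  assert (Heps : 0 < eps / (2 * M + 1)) by (apply Rdiv_lt_0_compat; [apply cond_pos | lra]).
  destruct (Hf (mkposreal _ Heps)) as [phi [psi [Happrox Hsmall]]]. simpl in Hsmall.
  exists (mkStepFun (stepfun_comp (fun y => clip M y * clip M y) a b phi)).
  exists (mkStepFun (StepFun_P28 (2 * M) (mkStepFun (StepFun_P4 a b 0)) psi)).
  split.
  - intros t Ht. simpl. unfold fct_cte.
    destruct (clip_spec M (f t) (phi t) (HM t Ht)) as [Hdiff Hclip].
    pose proof (HM t Ht). pose proof (Happrox t Ht).
    replace (f t * f t - clip M (phi t) * clip M (phi t))
      with ((f t - clip M (phi t)) * (f t + clip M (phi t))) by ring.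
    rewrite Rabs_mult.
    assert (Hsum : Rabs (f t + clip M (phi t)) <= 2 * M).
    { pose proof (Rabs_triang (f t) (clip M (phi t))). lra. }
    rewrite Rplus_0_l, (Rmult_comm (2 * M)).
    apply Rmult_le_compat; auto using Rabs_pos; lra.
  - rewrite StepFun_P30, StepFun_P18, Rmult_0_l, Rplus_0_l, Rabs_mult, (Rabs_pos_eq (2 * M)) by lra.
    pose proof (cond_pos eps).
    apply Rle_lt_trans with (2 * M * (eps / (2 * M + 1))).
    + apply Rmult_le_compat_l; lra.
    + apply Rmult_lt_reg_r with (2 * M + 1); [lra |].
      field_simplify; lra.
Qed.

Section Signal.
Variables (s : R -> R) (Ts tau : R).
Hypothesis Hsupp : forall t, (t < 0 \/ Ts < t) -> s t = 0.

Lemma signal_product_support (u v : R) :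
  s u * s v <> 0 -> (0 <= u <= Ts) /\ (0 <= v <= Ts).
Proof.
  intro Hne.
  destruct (Rlt_dec u 0) as [Hu|Hu]; [rewrite (Hsupp u) in Hne by lra; lra |].
  destruct (Rlt_dec Ts u) as [Hu'|Hu']; [rewrite (Hsupp u) in Hne by lra; lra |].
  destruct (Rlt_dec v 0) as [Hv|Hv]; [rewrite (Hsupp v) in Hne by lra; lra |].
  destruct (Rlt_dec Ts v) as [Hv'|Hv']; [rewrite (Hsupp v) in Hne by lra; lra |].
  lra.
Qed.

(* Shifts by at least two symbol periods do not overlap: G(k) = 0 for |k| >= 2. *)
Lemma Gram_far (k : Z) (i j : idx) :
  0 < tau < Ts -> (k >= 2 \/ k <= -2)%Z -> G s tau Ts k i j = 0.
Proof.
  intros Htau Hk.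
  assert (Hshift : IZR k * Ts >= 2 * Ts \/ IZR k * Ts <= - 2 * Ts).
  { destruct Hk as [Hk | Hk]; [left | right];
      [apply Z.ge_le, IZR_le in Hk | apply IZR_le in Hk]; nra. }
  unfold G, RInt_R. apply (lim_seq_eventually _ _ 0). intros n _.
  apply (RInt_point_supported _ _ _ 0); [pose proof (pos_INR n); lra |].
  intros t _.
  destruct (Req_dec (Scomp s tau i t * Scomp s tau j (t - IZR k * Ts)) 0) as [E | Hne];
    [exact E | exfalso].
  destruct i, j; simpl in Hne; apply signal_product_support in Hne; lra.
Qed.

(* s(t) s(t - Ts) is supported in the single point t = Ts. *)
Lemma Gram11_plus1 : G s tau Ts 1%Z I1 I1 = 0.
Proof.
  unfold G, RInt_R. apply (lim_seq_eventually _ _ 0). intros n _.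
  apply (RInt_point_supported _ _ _ Ts); [pose proof (pos_INR n); lra |].
  intros t Ht. simpl.
  destruct (Req_dec (s t * s (t - 1 * Ts)) 0) as [E | Hne]; [exact E | exfalso].
  apply signal_product_support in Hne. apply Ht. lra.
Qed.

(* s(t) s(t + Ts) is supported in the single point t = 0. *)
Lemma Gram11_minus1 : G s tau Ts (-1)%Z I1 I1 = 0.
Proof.
  unfold G, RInt_R. apply (lim_seq_eventually _ _ 0). intros n _.
  apply (RInt_point_supported _ _ _ 0); [pose proof (pos_INR n); lra |].
  intros t Ht. simpl.
  destruct (Req_dec (s t * s (t - -1 * Ts)) 0) as [E | Hne]; [exact E | exfalso].
  apply signal_product_support in Hne. apply Ht. lra.
Qed.

Lemma Gram11_zero :
  inhabited (Riemann_integrable s 0 Ts) -> 0 <= Ts ->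
  G s tau Ts 0%Z I1 I1 = RInt (fun t => s t * s t) 0 Ts.
Proof.
  intros [pr] HTs. pose proof (integrable_sq s 0 Ts pr) as pr2.
  unfold G, RInt_R. simpl Scomp.
  replace (fun t => s t * s (t - 0 * Ts)) with (fun t => s t * s t)
    by (apply functional_extensionality; intro t; do 2 f_equal; ring).
  destruct (INR_unbounded Ts) as [N HN].
  apply (lim_seq_eventually _ _ N). intros n Hn. apply le_INR in Hn.
  rewrite (RInt_eq _ _ _ pr2).
  apply (RInt_zero_extension _ _ _ _ _ pr2); try (pose proof (pos_INR n); lra).
  intros x Hx. rewrite Hsupp by lra. ring.
Qed.

(* The trigonometric polynomial sum_{k=-1}^{1} g(k) e^{-jkw}, written as in
   the definition of T~. *)
Definition trig3 (g : Z -> R) (w : R) : Cpx :=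
  mkC (g (-1)%Z * cos (IZR (-1) * w) + g 0%Z * cos (IZR 0 * w) + g 1%Z * cos (IZR 1 * w))
      (- (g (-1)%Z * sin (IZR (-1) * w)) + - (g 0%Z * sin (IZR 0 * w))
       + - (g 1%Z * sin (IZR 1 * w))).

Lemma Ttilde_trig3 (w : R) (i j : idx) : 0 < tau < Ts ->
  Ttilde s tau Ts w i j = trig3 (fun k => G s tau Ts k i j) w.
Proof.
  intro Htau. unfold Ttilde, trig3.
  f_equal; apply zsum_three; intros k Hk; rewrite Gram_far by assumption; ring.
Qed.

Lemma Ttilde11_re (w : R) : 0 < tau < Ts ->
  inhabited (Riemann_integrable s 0 Ts) -> RInt (fun t => s t * s t) 0 Ts = 1 ->
  Re (Ttilde s tau Ts w I1 I1) = 1.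
Proof.
  intros Htau Hint Henergy.
  rewrite Ttilde_trig3 by assumption. unfold trig3; simpl Re.
  rewrite Gram11_plus1, Gram11_minus1, Gram11_zero, Henergy by (assumption || lra).
  replace (0 * w) with 0 by ring. rewrite cos_0. ring.
Qed.

(* det T~(w), being a polynomial in cos and sin, is continuous in w. *)
Lemma detT_continuous (x : R) : 0 < tau < Ts ->
  continuity_pt (fun w => Re (detT s tau Ts w)) x.
Proof.
  intro Htau. unfold detT.
  replace (fun w => _) with (fun w =>
    Re (Csub (Cmul (trig3 (fun k => G s tau Ts k I1 I1) w) (trig3 (fun k => G s tau Ts k I2 I2) w))
             (Cmul (trig3 (fun k => G s tau Ts k I1 I2) w) (trig3 (fun k => G s tau Ts k I2 I1) w)))).
  - unfold trig3, Csub, Cmul; simpl Re; simpl Im. reg.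
  - apply functional_extensionality; intro w. rewrite !Ttilde_trig3 by assumption. reflexivity.
Qed.

End Signal.

Lemma Cnorm2_pos (z : Cpx) : z <> C0 -> 0 < Cnorm2 z.
Proof.
  destruct z as [x y]. intro Hz. unfold Cnorm2; simpl.
  destruct (Req_dec x 0) as [-> | Hx]; [destruct (Req_dec y 0) as [-> | Hy] |].
  - exfalso. apply Hz. reflexivity.
  - nra.
  - nra.
Qed.

(* A positive definite 2x2 complex matrix is Hermitian with positive (1,1)
   entry; this is read off from the quadratic form at e1, e2, e1+e2, e1+j e2. *)
Lemma pos_def_hermitian (M : idx -> idx -> Cpx) : pos_def M ->
  Im (M I1 I1) = 0 /\ Im (M I2 I2) = 0 /\ M I2 I1 = Cconj (M I1 I2) /\ 0 < Re (M I1 I1).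
Proof.
  intro Hpd.
  assert (Hone : mkC 1 0 <> C0) by (intro E; injection E; lra).
  destruct (Hpd (mkC 1 0) C0 (or_introl Hone)) as [A1 B1].
  destruct (Hpd C0 (mkC 1 0) (or_intror Hone)) as [A2 _].
  destruct (Hpd (mkC 1 0) (mkC 1 0) (or_introl Hone)) as [A3 _].
  destruct (Hpd (mkC 1 0) (mkC 0 1) (or_introl Hone)) as [A4 _].
  unfold quad_form, Cadd, Cmul, Cconj, C0 in *; simpl in *.
  destruct (M I1 I1) as [p11 q11], (M I1 I2) as [p12 q12],
           (M I2 I1) as [p21 q21], (M I2 I2) as [p22 q22]; simpl in *.
  repeat split; try lra. f_equal; lra.
Qed.

(* A positive definite 2x2 complex matrix has positive determinant: evaluate
   the quadratic form at z = (-M12, M11), which gives M11 det M. *)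
Lemma pos_def_det (M : idx -> idx -> Cpx) : pos_def M ->
  0 < Re (Csub (Cmul (M I1 I1) (M I2 I2)) (Cmul (M I1 I2) (M I2 I1))).
Proof.
  intro Hpd. destruct (pos_def_hermitian M Hpd) as [H11 [H22 [H21 Hpos]]].
  assert (Hz : mkC (Re (M I1 I1)) 0 <> C0) by (intro E; injection E; lra).
  destruct (Hpd (mkC (- Re (M I1 I2)) (- Im (M I1 I2))) (mkC (Re (M I1 I1)) 0)
              (or_intror Hz)) as [_ Hq].
  unfold quad_form, Csub, Cadd, Cmul, Cconj, C0 in *; rewrite H21 in *.
  destruct (M I1 I1) as [p11 q11], (M I1 I2) as [p12 q12], (M I2 I2) as [p22 q22];
    simpl in *. subst.
  apply (Rmult_lt_reg_l p11); nra.
Qed.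

(* A continuous function exceeding m on [a,b] (a < b) has integral larger than
   m (b - a), since it attains its minimum. *)
Lemma RiemannInt_gt_of_continuous (f : R -> R) (a b m : R) (Hab : a <= b)
  (Hcont : forall x, a <= x <= b -> continuity_pt f x) :
  a < b -> (forall x, a <= x <= b -> m < f x) ->
  m * (b - a) < RiemannInt (continuity_implies_RiemannInt Hab Hcont).
Proof.
  intros Hlt Hgt.
  destruct (continuity_ab_min f a b Hab Hcont) as [x0 [Hmin Hx0]].
  apply Rlt_le_trans with (f x0 * (b - a)).
  - apply Rmult_lt_compat_r; [lra | exact (Hgt x0 Hx0)].
  - rewrite <- (RiemannInt_P15 (RiemannInt_P14 a b (f x0))).
    apply RiemannInt_P19; [exact Hab |].
    intros x Hx. unfold fct_cte. apply Hmin. lra.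
Qed.

Theorem theorem10 (s : R -> R) (Ts tau : R)
  (Hsupp : forall t, (t < 0 \/ Ts < t) -> s t = 0)
  (Hint : inhabited (Riemann_integrable s 0 Ts))
  (Henergy : RInt (fun t => s t * s t) 0 Ts = 1)
  (Htau : 0 < tau < Ts)
  (Hpd : forall w, - PI <= w <= PI -> pos_def (Ttilde s tau Ts w)) :
  forall (rho0 : R) (a1 a2 : Cpx), 0 < rho0 -> a1 <> C0 -> a2 <> C0 ->
    I_EMacA s tau Ts rho0 a1 a2 > ln (1 + rho0 * (Cnorm2 a1 + Cnorm2 a2)).
Proof.
  intros rho0 a1 a2 Hrho Ha1 Ha2.
  pose proof (Cnorm2_pos a1 Ha1). pose proof (Cnorm2_pos a2 Ha2). pose proof PI_RGT_0.
  set (c := rho0 * (Cnorm2 a1 + Cnorm2 a2)).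
  set (d := rho0 ^ 2 * Cnorm2 a1 * Cnorm2 a2).
  assert (Hc : 0 < c) by (unfold c; nra).
  assert (Hd : 0 < d) by (unfold d; simpl; repeat apply Rmult_lt_0_compat; nra).
  set (D := fun w => Re (detT s tau Ts w)).
  assert (HD : forall w, - PI <= w <= PI -> 0 < D w)
    by (intros w Hw; apply pos_def_det, Hpd, Hw).
  set (F := fun w => ln (1 + c + d * D w)).
  assert (HF : forall w, - PI <= w <= PI -> continuity_pt F w).
  { intros w Hw. pose proof (HD w Hw).
    apply (continuity_pt_comp (fun w => 1 + c + d * D w) ln).
    - reg. apply detT_continuous; assumption.
    - apply derivable_continuous_pt. exists (/ (1 + c + d * D w)).
      apply derivable_pt_lim_ln. nra. }
  assert (Hab : - PI <= PI) by lra.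
  unfold I_EMacA. fold c d.
  replace (fun w => ln (1 + c * Re (Ttilde s tau Ts w I1 I1) + d * Re (detT s tau Ts w)))
    with F by (apply functional_extensionality; intro w; unfold F, D;
               rewrite Ttilde11_re by assumption; f_equal; ring).
  rewrite (RInt_eq _ _ _ (continuity_implies_RiemannInt Hab HF)).
  assert (Hbound : ln (1 + c) * (PI - - PI) < RiemannInt (continuity_implies_RiemannInt Hab HF)).
  { apply RiemannInt_gt_of_continuous; [lra |].
    intros w Hw. pose proof (HD w Hw). apply ln_increasing; unfold F; nra. }
  apply Rlt_gt. apply Rmult_lt_reg_l with (2 * PI); [lra |].
  rewrite <- Rmult_assoc, Rinv_r, Rmult_1_l by lra. lra.
Qed.
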